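(* Assume $K=o(\sqrt n)$, $\mathbb{E}_0(X_\Gamma)=\omega(1)$ and $\mathbb{E}_0(L^2)=1+o(1)$. Then every estimator $\hat{\mathcal K}$ of the planted set $\mathcal K$ satisfies $\mathrm{ov}(\hat{\mathcal K})=o(K)$.
   Context: Model: $n$ nodes; $\lambda>0$ fixed; $\Gamma$ a fixed graph on $K$ vertices. $\mathbb{P}_0$: $G\sim\mathcal G(n,\lambda/n)$. $\mathbb{P}_1$: $G=G_0\cup G'$, $G_0\sim\mathcal G(n,\lambda/n)$, $G'$ the image of $\Gamma$ under a uniformly random injection $\sigma$ of its vertices into $[n]$ independent of $G_0$; $\mathcal K$ is the image of $\sigma$. $X_\Gamma$ is the number of copies of $\Gamma$ in $G$ (subgraphs of $G$ isomorphic to $\Gamma$), $L=L(G)=\mathbb{P}_1(G)/\mathbb{P}_0(G)$ the likelihood ratio, and $\mathbb{E}_0$ expectation under $\mathbb{P}_0$. An estimator is a set $\hat{\mathcal K}$ of $K$ nodes computed from $G$; its overlap is $\mathrm{ov}(\hat{\mathcal K})=\sum_{i\in[n]}\mathbb{P}_1(i\in\hat{\mathcal K}\cap\mathcal K)$. Asymptotics as $n\to\infty$. *)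

From HB Require Import structures.
From mathcomp Require Import all_boot all_order all_algebra.
From mathcomp Require Import all_classical all_reals all_analysis.
Set Implicit Arguments. Unset Strict Implicit. Unset Printing Implicit Defensive.
Import Order.TTheory GRing.Theory Num.Theory.
Local Open Scope ring_scope.

(* A (simple) graph on vertex set 'I_n is its edge set: a set of 2-element
   subsets of 'I_n.  The type of all candidate graphs is {set {set 'I_n}};
   P0 gives probability 0 to those that are not edge sets. *)
Definition edges (n : nat) : {set {set 'I_n}} := [set e : {set 'I_n} | #|e| == 2%N].

Definition is_graph (n : nat) (G : {set {set 'I_n}}) : bool := G \subset edges n.

Section Model.
Variable R : realType.

(* edge probability lambda/n (clamped to 1 for the finitely many small n) *)
Definition pn (lam : R) (n : nat) : R := Num.min (lam / n%:R) 1.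

Definition P0 (lam : R) (n : nat) (G : {set {set 'I_n}}) : R :=
  if is_graph G then pn lam n ^+ #|G| * (1 - pn lam n) ^+ ('C(n, 2) - #|G|)
  else 0.

Definition imgraph (K n : nat) (s : 'I_K -> 'I_n) (Ga : {set {set 'I_K}})
  : {set {set 'I_n}} := [set s @: e | e : {set 'I_K} in Ga].

Definition ninj (K n : nat) : R :=
  (#|[set s : {ffun 'I_K -> 'I_n} | injectiveb s]|)%:R.

(* P1 : G = G0 \cup sigma(Gamma), sigma a uniform injection independent of G0 *)
Definition P1 (lam : R) (n K : nat) (Ga : {set {set 'I_K}})
  (G : {set {set 'I_n}}) : R :=
  (ninj K n)^-1 * \sum_(s : {ffun 'I_K -> 'I_n} | injectiveb s)
     \sum_(G0 : {set {set 'I_n}} | G0 :|: imgraph s Ga == G) P0 lam G0.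

Definition is_copy (K n : nat) (Ga : {set {set 'I_K}})
  (VE : ({set 'I_n} * {set {set 'I_n}})%type) : bool :=
  [exists s : {ffun 'I_K -> 'I_n},
     [&& injectiveb s, VE.1 == s @: setT & VE.2 == imgraph s Ga]].

Definition XGamma (K n : nat) (Ga : {set {set 'I_K}}) (G : {set {set 'I_n}})
  : nat :=
  #|[set VE : ({set 'I_n} * {set {set 'I_n}})%type
       | (VE.2 \subset G) && is_copy Ga VE]|.

Definition EX0 (lam : R) (n K : nat) (Ga : {set {set 'I_K}}) : R :=
  \sum_(G : {set {set 'I_n}}) P0 lam G * (XGamma Ga G)%:R.

Definition LR (lam : R) (n K : nat) (Ga : {set {set 'I_K}})
  (G : {set {set 'I_n}}) : R := P1 lam Ga G / P0 lam G.

Definition EL2 (lam : R) (n K : nat) (Ga : {set {set 'I_K}}) : R :=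
  \sum_(G : {set {set 'I_n}}) P0 lam G * (LR lam Ga G) ^+ 2.

(* overlap of an estimator est : graph -> set of nodes:
   sum_i P1(i in est(G) \cap K) = E_1 |est(G) \cap image(sigma)| *)
Definition overlap (lam : R) (n K : nat) (Ga : {set {set 'I_K}})
  (est : {set {set 'I_n}} -> {set 'I_n}) : R :=
  (ninj K n)^-1 * \sum_(s : {ffun 'I_K -> 'I_n} | injectiveb s)
     \sum_(G0 : {set {set 'I_n}})
        P0 lam G0 * (#|est (G0 :|: imgraph s Ga) :&: s @: setT|)%:R.

End Model.

From HB Require Import structures.
From mathcomp Require Import all_boot all_order all_algebra.
From mathcomp Require Import all_classical all_reals all_analysis.
From mathcomp Require Import zify ring.
From mathcomp Require Import perm.
Import Order.TTheory GRing.Theory Num.Theory numFieldNormedType.Exports.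
Set Implicit Arguments. Unset Strict Implicit. Unset Printing Implicit Defensive.
Local Open Scope ring_scope.

(* Write P1 = P0 * L with L the average, over injections s, of the likelihood
   ratio l_s(G) = 1[s(Gamma) \subset G] / p^|s(Gamma)| of planting the copy
   s(Gamma).  The overlap of any estimator equals E_0 sum_(i in est G) L_i(G),
   where L_i restricts that average to the s whose image V_s contains i.  By
   AM-GM each term is at most t/2 + L_i^2/(2t), and E_0 sum_i L_i^2 is the
   average over pairs (s, s') of E_0[l_s l_s'] |V_s :&: V_s'|.  Since
   E_0[l_s l_s'] = p^-|s(Gamma) :&: s'(Gamma)| >= 1 and |V_s :&: V_s'| <= K,
   this is at most the average of |V_s :&: V_s'| plus K (E_0 L^2 - 1), that is
   K^2/n + K (E_0 L^2 - 1).  Hence ov/K <= t/2 + (K/n + E_0 L^2 - 1)/(2t) for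
   every t > 0, and both K/n and E_0 L^2 - 1 tend to 0. *)

Lemma exprDn_subsets (R : comPzSemiRingType) (T : finType) (A : {set T}) (x y : R) :
  (x + y) ^+ #|A| = \sum_(S : {set T} | S \subset A) x ^+ #|S| * y ^+ #|A :\: S|.
Proof.
pose F i := if i \in A then x else 0.
pose G i := if i \in A then y else 1.
have -> : (x + y) ^+ #|A| = \prod_i (F i + G i).
  rewrite (bigID (mem A)) /= [X in _ * X]big1 ?mulr1 => [|i /negbTE iNA]; last first.
    by rewrite /F /G iNA add0r.
  by rewrite -prodr_const; apply: eq_bigr => i iA; rewrite /F /G iA.
rewrite bigA_distr (bigID (fun S : {set T} => S \subset A)) /=.
rewrite [X in _ + X]big1 ?addr0 => [|S /subsetPn[i iS iNA]]; last first.
  by rewrite (bigD1 i) //= iS /F (negbTE iNA) mul0r.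
apply: eq_bigr => S SA; rewrite (bigID (mem S)) /= -!prodr_const; congr (_ * _).
  by apply: eq_bigr => i iS; rewrite iS /F (fintype.subsetP SA).
rewrite [LHS](bigID (mem A)) /= [X in _ * X]big1 ?mulr1 => [|i]; last first.
  by move=> /andP[/negbTE -> /negbTE iNA]; rewrite /G iNA.
apply: eq_big => [i|i]; first by rewrite !inE andbC.
by move=> /andP[/negbTE -> iA]; rewrite /G iA.
Qed.

Lemma natr_card (R : pzSemiRingType) (T : finType) (A : {set T}) :
  #|A|%:R = \sum_i (i \in A)%:R :> R.
Proof. by rewrite -sum1_card natr_sum big_mkcond; apply: eq_bigr => i _; case: (i \in A). Qed.

Lemma natr_cardI (R : pzSemiRingType) (T : finType) (A B : {set T}) :
  #|A :&: B|%:R = \sum_i (i \in A)%:R * (i \in B)%:R :> R.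
Proof.
rewrite -sum1_card natr_sum big_mkcond; apply: eq_bigr => i _.
by rewrite inE; case: (i \in A); case: (i \in B); rewrite ?mul1r ?mul0r.
Qed.

Lemma ler_mean_square_div (R : realFieldType) (x t : R) :
  0 < t -> x <= t / 2 + x ^+ 2 / (2 * t).
Proof.
move=> t_gt0; rewrite -(ler_pM2r t_gt0).
have -> : (t / 2 + x ^+ 2 / (2 * t)) * t = (x ^+ 2 + t ^+ 2) / 2.
  by field; rewrite gt_eqF.
exact: leif_mean_square.
Qed.

Section SetU.
Variables (R : nmodType) (T : finType).

Lemma sum_partition_setU (H : {set T}) (F : {set T} -> {set T} -> R) :
  \sum_(A : {set T}) F A (A :|: H) = \sum_(G : {set T}) \sum_(A | A :|: H == G) F A G.
Proof.
rewrite (partition_big (fun A => A :|: H) xpredT) //=.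
by apply: eq_bigr => G _; apply: eq_bigr => A /eqP ->.
Qed.

Lemma sum_setU_eq (H G : {set T}) (F : {set T} -> R) : H \subset G ->
  \sum_(A : {set T} | A :|: H == G) F A = \sum_(S : {set T} | S \subset H) F ((G :\: H) :|: S).
Proof.
move=> HG; rewrite (reindex_onto (fun S : {set T} => (G :\: H) :|: S) (fun A => A :&: H)).
  apply: eq_bigl => S; apply/andP/idP => [[_ /eqP <-]|SH]; first exact: subsetIr.
  split; apply/eqP/setP => x; rewrite !inE;
    have /implyP := fintype.subsetP SH x; have /implyP := fintype.subsetP HG x;
    by case: (x \in S); case: (x \in H); case: (x \in G).
move=> A /eqP <-; apply/setP => x; rewrite !inE.
by case: (x \in A); case: (x \in H).
Qed.

End SetU.

Section ErdosRenyi.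
Variables (R : realType) (lam : R) (n : nat).
Local Notation p := (pn lam n).
Local Notation graph := {set {set 'I_n}}.
Hypotheses (p_gt0 : 0 < p) (p_le1 : p <= 1).

Lemma P0E (G : graph) : P0 lam G =
  if G \subset edges n then p ^+ #|G| * (1 - p) ^+ #|edges n :\: G| else 0.
Proof.
rewrite /P0 /is_graph; case: ifP => // GE.
by rewrite cardsD (finset.setIidPr GE) card_draws card_ord.
Qed.

Lemma P0_ge0 (G : graph) : 0 <= P0 lam G.
Proof.
rewrite P0E; case: ifP => // _.
by rewrite mulr_ge0 // exprn_ge0 ?subr_ge0 // ltW.
Qed.

Lemma sum_P0 : \sum_(G : graph) P0 lam G = 1.
Proof.
rewrite (eq_bigr _ (fun G _ => P0E G)) -big_mkcond /=.
by rewrite -exprDn_subsets addrC subrK expr1n.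
Qed.

Lemma P0_setDU (G H S : graph) : S \subset H -> H \subset G -> G \subset edges n ->
  P0 lam ((G :\: H) :|: S) * p ^+ #|H| =
  P0 lam G * (p ^+ #|S| * (1 - p) ^+ #|H :\: S|).
Proof.
move=> SH HG GE; set A := (G :\: H) :|: S.
have AE : A \subset edges n.
  have HE := fintype.subset_trans HG GE.
  by rewrite finset.subUset (fintype.subset_trans (subsetDl G H) GE)
             (fintype.subset_trans SH HE).
have AIH : A :&: H = S.
  apply/setP => x; rewrite !inE; have /implyP := fintype.subsetP SH x.
  by case: (x \in S); case: (x \in H); case: (x \in G).
have ADH : A :\: H = G :\: H.
  apply/setP => x; rewrite !inE; have /implyP := fintype.subsetP SH x.
  by case: (x \in S); case: (x \in H); case: (x \in G).
have cardA := cardsID H A; rewrite AIH ADH in cardA.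
have cardG := cardsID H G; rewrite (finset.setIidPr HG) in cardG.
have cardH := cardsID S H; rewrite (finset.setIidPr SH) in cardH.
have cardEA := cardsID A (edges n); rewrite (finset.setIidPr AE) in cardEA.
have cardEG := cardsID G (edges n); rewrite (finset.setIidPr GE) in cardEG.
rewrite !P0E AE GE mulrAC -exprD mulrACA -!exprD.
by congr (p ^+ _ * _ ^+ _); lia.
Qed.

Lemma sum_P0_setU (H G : graph) : H \subset edges n ->
  \sum_(A | A :|: H == G) P0 lam A = (H \subset G)%:R * P0 lam G / p ^+ #|H|.
Proof.
move=> HE; have [HG|HNG] := boolP (H \subset G); last first.
  rewrite !mul0r big_pred0 // => A; apply: contraNF HNG => /eqP <-.
  exact: finset.subsetUr.
have [GE|GNE] := boolP (G \subset edges n); last first.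
  rewrite P0E (negbTE GNE) mulr0 mul0r big1 // => A /eqP AHG; rewrite P0E.
  by case: ifP => // AE; case/negP: GNE; rewrite -AHG finset.subUset AE HE.
have pH_neq0 : p ^+ #|H| != 0 by rewrite expf_neq0 // gt_eqF.
rewrite sum_setU_eq // mul1r; apply: (mulIf pH_neq0); rewrite divfK // mulr_suml.
under eq_bigr => S SH do rewrite P0_setDU //.
by rewrite -mulr_sumr -exprDn_subsets addrC subrK expr1n mulr1.
Qed.

Lemma sum_P0_supset (H : graph) : H \subset edges n ->
  \sum_(G : graph) P0 lam G * (H \subset G)%:R = p ^+ #|H|.
Proof.
move=> HE; have pH_neq0 : p ^+ #|H| != 0 by rewrite expf_neq0 // gt_eqF.
apply: (mulIf (invr_neq0 pH_neq0)); rewrite mulfV // -[RHS]sum_P0 mulr_suml.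
rewrite (sum_partition_setU H (fun A _ => P0 lam A)).
by apply: eq_bigr => G _; rewrite sum_P0_setU // [P0 lam G * _]mulrC.
Qed.

Section Planted.
Variables (K : nat) (Ga : {set {set 'I_K}}).
Hypothesis Ga_graph : is_graph Ga.
Local Notation vmap := {ffun 'I_K -> 'I_n}.
Local Notation N := (ninj R K n).

Definition copy (s : vmap) : graph := imgraph s Ga.

Definition copy_nodes (s : vmap) : {set 'I_n} := s @: setT.

Definition lr_copy (s : vmap) (G : graph) : R :=
  (copy s \subset G)%:R / p ^+ #|copy s|.

Definition lr (G : graph) : R := N^-1 * \sum_(s : vmap | injectiveb s) lr_copy s G.

(* [P0 lam G * lr_node G i] is the P1-probability of observing G with node i
   in the planted set. *)
Definition lr_node (G : graph) (i : 'I_n) : R :=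
  N^-1 * \sum_(s : vmap | injectiveb s) lr_copy s G * (i \in copy_nodes s)%:R.

Definition lr_corr (s s' : vmap) : R :=
  \sum_(G : graph) P0 lam G * (lr_copy s G * lr_copy s' G).

Definition common_nodes (s s' : vmap) : nat := #|copy_nodes s :&: copy_nodes s'|.

Lemma copy_sub_edges (s : vmap) : injectiveb s -> copy s \subset edges n.
Proof.
move=> /injectiveP s_inj; apply/fintype.subsetP => e /imsetP[e0 e0Ga ->].
by have := fintype.subsetP Ga_graph e0 e0Ga; rewrite !inE card_imset.
Qed.

Lemma card_copy_nodes (s : vmap) : injectiveb s -> #|copy_nodes s| = K.
Proof.
move=> /injectiveP s_inj; rewrite card_imset //.
by rewrite -[RHS]card_ord; apply: eq_card => x; rewrite in_setT.
Qed.

Lemma sum_inj_const (c : R) : \sum_(s : vmap | injectiveb s) c = c * N.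
Proof. by rewrite sumr_const /ninj cardsE mulr_natr. Qed.

Lemma P1E (G : graph) : P1 lam Ga G = P0 lam G * lr G.
Proof.
rewrite /P1 /lr mulrCA; congr (_ * _); rewrite mulr_sumr.
apply: eq_bigr => s s_inj; rewrite sum_P0_setU ?copy_sub_edges //.
by rewrite /lr_copy -mulrA mulrCA.
Qed.

Lemma EL2E : EL2 lam n Ga = \sum_(G : graph) P0 lam G * lr G ^+ 2.
Proof.
apply: eq_bigr => G _; rewrite /LR P1E.
have [->|P0_neq0] := eqVneq (P0 lam G) 0; first by rewrite !mul0r.
by rewrite [_ * _ / _]mulrC mulKf.
Qed.

Lemma sum_lr_node (A : {set 'I_n}) (G : graph) :
  \sum_i (i \in A)%:R * lr_node G i =
  N^-1 * \sum_(s : vmap | injectiveb s) lr_copy s G * #|A :&: copy_nodes s|%:R.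
Proof.
under eq_bigr do rewrite mulrCA mulr_sumr.
rewrite -mulr_sumr exchange_big /=; congr (_ * _); apply: eq_bigr => s _.
by rewrite natr_cardI mulr_sumr; apply: eq_bigr => i _; ring.
Qed.

Lemma overlapE (est : graph -> {set 'I_n}) :
  overlap lam Ga est =
  \sum_(G : graph) P0 lam G * \sum_i (i \in est G)%:R * lr_node G i.
Proof.
under [RHS]eq_bigr do rewrite sum_lr_node mulrCA mulr_sumr.
rewrite -mulr_sumr exchange_big /=; congr (_ * _); apply: eq_bigr => s s_inj.
rewrite (sum_partition_setU (copy s)
  (fun G0 G => P0 lam G0 * #|est G :&: copy_nodes s|%:R)).
apply: eq_bigr => G _; rewrite -mulr_suml sum_P0_setU ?copy_sub_edges //.
by rewrite /lr_copy; ring.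
Qed.

Lemma lr_corr_ge1 (s s' : vmap) : injectiveb s -> injectiveb s' -> 1 <= lr_corr s s'.
Proof.
move=> s_inj s'_inj.
have pp_gt0 : 0 < p ^+ #|copy s| * p ^+ #|copy s'| by rewrite mulr_gt0 ?exprn_gt0.
have -> : lr_corr s s' = p ^+ #|copy s :|: copy s'| / (p ^+ #|copy s| * p ^+ #|copy s'|).
  rewrite -sum_P0_supset ?finset.subUset ?copy_sub_edges // mulr_suml.
  apply: eq_bigr => G _; rewrite /lr_copy finset.subUset invfM.
  by case: (copy s \subset G); case: (copy s' \subset G); rewrite /=; ring.
rewrite ler_pdivlMr // mul1r -exprD.
by apply: ler_wiXn2l; [exact: ltW | | exact: leq_card_setU].
Qed.

Lemma sum_P0_mul_sum_inj (f g : vmap -> graph -> R) :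
  \sum_(G : graph) P0 lam G * ((N^-1 * \sum_(s : vmap | injectiveb s) f s G) *
                               (N^-1 * \sum_(s : vmap | injectiveb s) g s G)) =
  N^-1 * N^-1 * \sum_(s : vmap | injectiveb s) \sum_(s' : vmap | injectiveb s')
                  \sum_(G : graph) P0 lam G * (f s G * g s' G).
Proof.
under eq_bigr do rewrite mulrACA big_distrlr /= mulrCA.
rewrite -mulr_sumr; congr (_ * _).
under eq_bigr do rewrite mulr_sumr.
rewrite exchange_big /=; apply: eq_bigr => s _.
under eq_bigr do rewrite mulr_sumr.
by rewrite exchange_big.
Qed.

Lemma EL2_lr_corr : EL2 lam n Ga =
  N^-1 * N^-1 * \sum_(s : vmap | injectiveb s) \sum_(s' : vmap | injectiveb s') lr_corr s s'.
Proof.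
rewrite EL2E; under eq_bigr do rewrite expr2.
exact: (sum_P0_mul_sum_inj lr_copy lr_copy).
Qed.

Lemma sum_lr_node_sqr : \sum_(G : graph) P0 lam G * \sum_i lr_node G i ^+ 2 =
  N^-1 * N^-1 * \sum_(s : vmap | injectiveb s) \sum_(s' : vmap | injectiveb s')
                  lr_corr s s' * (common_nodes s s')%:R.
Proof.
under eq_bigr do rewrite mulr_sumr.
under eq_bigr do under eq_bigr do rewrite expr2.
rewrite exchange_big /=.
under eq_bigr => i _ do
  rewrite (sum_P0_mul_sum_inj (fun s G => lr_copy s G * (i \in copy_nodes s)%:R)
                              (fun s G => lr_copy s G * (i \in copy_nodes s)%:R)).
rewrite -mulr_sumr; congr (_ * _).
rewrite exchange_big; apply: eq_bigr => s _ /=.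
rewrite exchange_big; apply: eq_bigr => s' _ /=.
rewrite /common_nodes natr_cardI /lr_corr big_distrlr exchange_big /=.
by apply: eq_bigr => G _; apply: eq_bigr => i _; ring.
Qed.

Lemma sum_inj_mem_copy_nodes_const (i j : 'I_n) :
  \sum_(s : vmap | injectiveb s) (i \in copy_nodes s)%:R =
  \sum_(s : vmap | injectiveb s) (j \in copy_nodes s)%:R :> R.
Proof.
pose h (s : vmap) : vmap := [ffun k => tperm i j (s k)].
have hK : involutive h by move=> s; apply/ffunP => k; rewrite !ffunE tpermK.
rewrite (reindex_inj (inv_inj hK)) /=; apply: eq_big => s.
  apply/injectiveP/injectiveP => s_inj x y; last first.
    by rewrite !ffunE => /perm_inj; apply: s_inj.
  by move=> sxy; apply: s_inj; rewrite !ffunE sxy.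
move=> _; congr ((_ : bool)%:R).
apply/imsetP/imsetP => -[k kT]; rewrite ?ffunE => e; exists k => //.
  by rewrite -(tpermK i j (s k)) -e tpermL.
by rewrite ffunE -e tpermR.
Qed.

Lemma sum_mem_copy_nodes :
  \sum_i \sum_(s : vmap | injectiveb s) (i \in copy_nodes s)%:R = K%:R * N.
Proof.
rewrite exchange_big /= -sum_inj_const; apply: eq_bigr => s s_inj.
by rewrite -(card_copy_nodes s_inj) natr_card.
Qed.

Lemma sum_common_nodes : (0 < n)%N ->
  \sum_(s : vmap | injectiveb s) \sum_(s' : vmap | injectiveb s') (common_nodes s s')%:R =
  (K%:R * N) ^+ 2 / n%:R.
Proof.
move=> n_gt0; pose c := \sum_(s : vmap | injectiveb s) (Ordinal n_gt0 \in copy_nodes s)%:R : R.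
have c_const i : \sum_(s : vmap | injectiveb s) (i \in copy_nodes s)%:R = c.
  exact: sum_inj_mem_copy_nodes_const.
have -> : \sum_(s : vmap | injectiveb s) \sum_(s' : vmap | injectiveb s')
            (common_nodes s s')%:R =
          \sum_i (\sum_(s : vmap | injectiveb s) (i \in copy_nodes s)%:R) *
                 (\sum_(s' : vmap | injectiveb s') (i \in copy_nodes s')%:R).
  symmetry; under eq_bigr do rewrite big_distrlr /=.
  rewrite exchange_big /=; apply: eq_bigr => s _.
  by rewrite exchange_big /=; apply: eq_bigr => s' _; rewrite natr_cardI.
under eq_bigr do rewrite c_const.
have n_c : n%:R * c = K%:R * N.
  rewrite -sum_mem_copy_nodes (eq_bigr _ (fun i _ => c_const i)).
  by rewrite sumr_const card_ord mulr_natl.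
rewrite sumr_const card_ord -n_c -mulr_natl; field.
by rewrite pnatr_eq0 -lt0n.
Qed.

Lemma common_nodes_le (s s' : vmap) : injectiveb s -> (common_nodes s s' <= K)%N.
Proof.
by move=> s_inj; rewrite -(card_copy_nodes s_inj) subset_leq_card ?finset.subsetIl.
Qed.

Lemma sum_lr_node_sqr_le : (0 < n)%N -> N != 0 ->
  \sum_(G : graph) P0 lam G * \sum_i lr_node G i ^+ 2 <=
  K%:R ^+ 2 / n%:R + K%:R * (EL2 lam n Ga - 1).
Proof.
move=> n_gt0 N_neq0; rewrite sum_lr_node_sqr.
have corr_common_le (s s' : vmap) : injectiveb s -> injectiveb s' ->
    lr_corr s s' * (common_nodes s s')%:R <=
    (common_nodes s s')%:R + K%:R * (lr_corr s s' - 1).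
  move=> s_inj s'_inj; rewrite -subr_ge0.
  have -> : (common_nodes s s')%:R + K%:R * (lr_corr s s' - 1) -
            lr_corr s s' * (common_nodes s s')%:R =
            (lr_corr s s' - 1) * (K%:R - (common_nodes s s')%:R) by ring.
  by rewrite mulr_ge0 // subr_ge0 ?lr_corr_ge1 ?ler_nat ?common_nodes_le.
apply: le_trans (ler_wpM2l _ (ler_sum _ (fun s s_inj =>
  ler_sum _ (fun s' s'_inj => corr_common_le s s' s_inj s'_inj)))) _.
  by rewrite mulr_ge0 ?invr_ge0 ?ler0n.
under eq_bigr do rewrite big_split /= -mulr_sumr sumrB sum_inj_const.
rewrite big_split /= sum_common_nodes // -mulr_sumr sumrB sum_inj_const EL2_lr_corr.
rewrite le_eqVlt; apply/predU1P; left; field.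
by rewrite N_neq0 pnatr_eq0 -lt0n n_gt0.
Qed.

Lemma overlap_le (est : graph -> {set 'I_n}) (t : R) :
  (forall G, #|est G| = K) -> 0 < t -> (0 < n)%N -> N != 0 ->
  overlap lam Ga est <=
  K%:R * (t / 2 + (K%:R / n%:R + (EL2 lam n Ga - 1)) / (2 * t)).
Proof.
move=> est_card t_gt0 n_gt0 N_neq0.
have amgm G : \sum_i (i \in est G)%:R * lr_node G i <=
    K%:R * (t / 2) + (\sum_i lr_node G i ^+ 2) / (2 * t).
  rewrite -(est_card G) natr_card !mulr_suml -big_split; apply: ler_sum => i _ /=.
  case: (i \in est G); rewrite ?mul1r ?mul0r ?add0r; first exact: ler_mean_square_div.
  by rewrite divr_ge0 ?sqr_ge0 // mulr_ge0 // ltW.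
rewrite overlapE; apply: le_trans (ler_sum _ (fun G _ => ler_wpM2l (P0_ge0 G) (amgm G))) _.
under eq_bigr do rewrite mulrDr [P0 lam _ * (_ / _)]mulrA.
rewrite big_split /= -!mulr_suml sum_P0 mul1r mulrDr lerD2l mulrA ler_pM2r; last first.
  by rewrite invr_gt0 mulr_gt0.
apply: le_trans (sum_lr_node_sqr_le n_gt0 N_neq0) _.
rewrite le_eqVlt; apply/predU1P; left; field.
by rewrite pnatr_eq0 -lt0n.
Qed.

End Planted.

End ErdosRenyi.

Lemma pn_gt0 (R : realType) (lam : R) (n : nat) : 0 < lam -> (0 < n)%N -> 0 < pn lam n.
Proof. by move=> lam_gt0 n_gt0; rewrite /pn lt_min ltr01 andbT divr_gt0 ?ltr0n. Qed.

Lemma pn_le1 (R : realType) (lam : R) (n : nat) : pn lam n <= 1.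
Proof. by rewrite /pn ge_min lexx orbT. Qed.

Lemma overlap_ge0 (R : realType) (lam : R) (n K : nat) (Ga : {set {set 'I_K}})
    (est : {set {set 'I_n}} -> {set 'I_n}) :
  0 < lam -> (0 < n)%N -> 0 <= overlap lam Ga est.
Proof.
move=> lam_gt0 n_gt0; rewrite mulr_ge0 ?invr_ge0 ?ler0n //.
do 2!(apply: sumr_ge0 => ? _); rewrite mulr_ge0 ?ler0n //.
exact: P0_ge0 (pn_gt0 lam_gt0 n_gt0) (pn_le1 lam n) _.
Qed.

Lemma ler_div_sqrt_natr (R : rcfType) (x : R) (n : nat) :
  0 <= x -> x / n%:R <= x / Num.sqrt n%:R.
Proof.
move=> x_ge0; have [->|n_gt0] := posnP n; first by rewrite sqrtr0 invr0.
rewrite ler_wpM2l // lef_pV2 ?posrE ?sqrtr_gt0 ?ltr0n //.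
rewrite -{2}[n%:R]sqr_sqrtr ?ler0n // expr2 ler_peMr ?sqrtr_ge0 //.
by rewrite -[X in X <= _]sqrtr1 ler_sqrt ?ler1n.
Qed.

Local Open Scope classical_set_scope.

Theorem theorem5 (R : realType) (lam : R) (K : nat -> nat)
  (Ga : forall n : nat, {set {set 'I_(K n)}}) :
  0 < lam ->
  (forall n, is_graph (Ga n)) ->
  ((fun n => (K n)%:R / Num.sqrt (n%:R : R)) @ \oo --> (0 : R)) ->
  ((fun n => EX0 lam n (Ga n)) @ \oo --> +oo) ->
  ((fun n => EL2 lam n (Ga n)) @ \oo --> (1 : R)) ->
  forall est : forall n : nat, {set {set 'I_n}} -> {set 'I_n},
    (forall n G, #|est n G| = K n) ->
    (fun n => overlap lam (Ga n) (est n) / (K n)%:R) @ \oo --> (0 : R).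
Proof.
(* The bound needs no lower bound on E_0(X_Gamma). *)
move=> lam_gt0 Ga_graph K_sqrt _ EL2_1 est est_card.
apply/cvgrPdist_le => e e_gt0.
have e2_gt0 : 0 < e ^+ 2 / 2 by rewrite divr_gt0 ?exprn_gt0.
move/cvgrPdist_le/(_ _ e2_gt0): K_sqrt => K_sqrt.
move/cvgrPdist_le/(_ _ e2_gt0): EL2_1 => EL2_1.
near=> n.
have n_gt0 : (0 < n)%N by near: n; exact: nbhs_infty_gt.
rewrite sub0r normrN ger0_norm ?divr_ge0 ?overlap_ge0 //.
have [K0|K_gt0] := posnP (K n); first by rewrite [in X in _ / X]K0 invr0 mulr0 ltW.
have [N0|N_neq0] := eqVneq (ninj R (K n) n) 0.
  by rewrite /overlap N0 invr0 !mul0r ltW.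
have Kn_le : (K n)%:R / n%:R <= e ^+ 2 / 2.
  apply: le_trans (ler_div_sqrt_natr _ (ler0n _ _)) _.
  have : `|0 - (K n)%:R / Num.sqrt (n%:R : R)| <= e ^+ 2 / 2 by near: n.
  by rewrite sub0r normrN ger0_norm ?divr_ge0 ?sqrtr_ge0.
have EL2_le : EL2 lam n (Ga n) - 1 <= e ^+ 2 / 2.
  have : `|1 - EL2 lam n (Ga n)| <= e ^+ 2 / 2 by near: n.
  by rewrite distrC; apply: le_trans (ler_norm _).
rewrite ler_pdivrMr ?ltr0n // mulrC.
apply: le_trans (overlap_le (pn_gt0 lam_gt0 n_gt0) (pn_le1 _ _) (Ga_graph n)
  (est_card n) e_gt0 n_gt0 N_neq0) _.
rewrite ler_pM2l ?ltr0n // [X in _ <= X]splitr lerD2l ler_pdivrMr ?mulr_gt0 //.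
apply: le_trans (lerD Kn_le EL2_le) _.
by rewrite -splitr le_eqVlt; apply/predU1P; left; field.
Unshelve. all: by end_near.
Qed.
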